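(* Let $L$ be an operator of order $n>0$ in normal form in $A_1(\mathbf{C})$, and consider its test-filtration $\delta_{p,q}$. Assume that the symbol $\sigma(L)\in\mathbf{C}[\chi,\xi]$ is a power of an irreducible polynomial $g\in\mathbf{C}[\chi,\xi]$. Then for every nonzero $M$ in the centralizer $\mathcal{C}(L)=\{M\in A_1(\mathbf{C}):[L,M]=0\}$, the symbol $\sigma(M)$ is (a nonzero constant multiple of) a power of $g$.
   Context: $A_1(\mathbf{C})$ is the first Weyl algebra of operators $P=\sum a_{ij}x^i\partial^j$, $[\partial,x]=1$; normal form means $P=\partial^n+u_{n-2}\partial^{n-2}+\dots+u_0$. Newton diagram $\mathcal{N}(P)=\{(i,j):a_{ij}\neq0\}$. For nonnegative integers $p,q$, $p+q>0$, $\Lambda_{p,q}(i,j)=pi+qj$, $\delta_{p,q}(P)=\max_{(i,j)\in\mathcal{N}(P)}\Lambda_{p,q}(i,j)$, and the symbol of $P$ is the polynomial $\sigma(P)=\sum_{\Lambda_{p,q}(i,j)=\delta_{p,q}(P)}a_{ij}\chi^i\xi^j\in\mathbf{C}[\chi,\xi]$. The test-filtration for $L\neq\partial^n$ is the $\delta_{p,q}$ for the (up to scaling unique) linear form with $\delta_{p,q}(L)=\Lambda_{p,q}(0,n)=\Lambda_{p,q}(a,b)$ for some $(a,b)\in\mathcal{N}(L)\setminus\{(0,n)\}$. *)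

From HB Require Import structures.
From mathcomp Require Import all_boot all_order all_algebra.
Set Implicit Arguments. Unset Strict Implicit. Unset Printing Implicit Defensive.
Import Order.TTheory GRing.Theory Num.Theory.
Local Open Scope ring_scope.

(* Elements P = \sum a_ij x^i d^j of the Weyl algebra A_1(F), stored in
   normal-ordered form as P : {poly {poly F}}: the outer variable is the
   derivation d (xi), the inner variable is x (chi), so a_ij = P`_j`_i.
   The same type, with its commutative product, is F[chi, xi]. *)

Definition wcoef (F : fieldType) (P : {poly {poly F}}) (i j : nat) : F :=
  (P`_j)`_i.

(* Product of the Weyl algebra in normal-ordered form:
   P * Q = \sum_t (1/t!) (d_xi^t P) (d_chi^t Q)  (commutative products),
   which is the normal-ordering rule  d^j x^k = \sum_t C(j,t) k^_t x^(k-t) d^(j-t),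
   i.e. [d, x] = 1. *)
Definition wmul (F : fieldType) (P Q : {poly {poly F}}) : {poly {poly F}} :=
  \sum_(t < size P) P^`N(t) * map_poly (fun c : {poly F} => c^`(t)) Q.

Definition wdelta (F : fieldType) (p q : nat) (P : {poly {poly F}}) : nat :=
  \big[maxn/0%N]_(j < size P)
    \big[maxn/0%N]_(i < size P`_j | wcoef P i j != 0) (p * i + q * j)%N.

Definition wsymbol (F : fieldType) (p q : nat) (P : {poly {poly F}})
  : {poly {poly F}} :=
  \poly_(j < size P) \poly_(i < size P`_j)
     (if (p * i + q * j == wdelta p q P)%N then wcoef P i j else 0).

Definition birreducible (F : fieldType) (g : {poly {poly F}}) : Prop :=
  [/\ g != 0, g \isn't a GRing.unit &
      forall a b : {poly {poly F}}, g = a * b ->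
        a \is a GRing.unit \/ b \is a GRing.unit].

From HB Require Import structures.
From mathcomp Require Import all_boot all_order all_algebra.
From mathcomp Require Import ring zify.
Set Implicit Arguments. Unset Strict Implicit. Unset Printing Implicit Defensive.
Import Order.TTheory GRing.Theory Num.Theory.
Local Open Scope ring_scope.

Section CharZero.
Variable R : idomainType.
Hypothesis R_char0 : [pchar R] =i pred0.

Lemma mulrn_eq0_char0 (x : R) (n : nat) : (x *+ n == 0) = (n == 0%N) || (x == 0).
Proof.
by rewrite -mulr_natr mulf_eq0 orbC; move/pcharf0P: R_char0 => ->.
Qed.

Lemma mulrnI_char0 (x : R) (m n : nat) : x != 0 -> x *+ m = x *+ n -> m = n.
Proof.
move=> x0; wlog le_nm : m n / (n <= m)%N => [hw|].
  by case: (leqP n m) => [|/ltnW] /hw h // /esym /h.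
move=> e; apply/eqP; rewrite eqn_leq le_nm andbT -subn_eq0.
have : x *+ (m - n) == 0 by rewrite mulrnBr // e subrr.
by rewrite mulrn_eq0_char0 (negbTE x0) orbF.
Qed.

Lemma mulrIn_char0 (n : nat) (x y : R) : (0 < n)%N -> x *+ n = y *+ n -> x = y.
Proof.
move=> n0 e; apply/eqP; rewrite -subr_eq0.
have : (x - y) *+ n == 0 by rewrite mulrnBl e subrr.
by rewrite mulrn_eq0_char0 -[(n == 0)%N]negbK -lt0n n0.
Qed.

End CharZero.

Section Support.
Variable F : fieldType.
Local Notation R2 := {poly {poly F}}.

Definition supp (P : R2) (Rl : nat -> nat -> Prop) : Prop :=
  forall i j, wcoef P i j != 0 -> Rl i j.

Lemma wcoef_out (P : R2) i j :
  leq (size P) j || leq (size P`_j) i -> wcoef P i j = 0.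
Proof.
rewrite /wcoef; case/orP => h; last by rewrite nth_default.
by rewrite (nth_default _ h) coef0.
Qed.

Lemma wcoef_lead (P : R2) : P != 0 -> exists i, wcoef P i (size P).-1 != 0.
Proof.
move=> P0; exists (size (lead_coef P)).-1; rewrite /wcoef -/(lead_coef P).
by rewrite -/(lead_coef (lead_coef P)) lead_coef_eq0 lead_coef_eq0.
Qed.

Lemma wcoefD (P Q : R2) i j : wcoef (P + Q) i j = wcoef P i j + wcoef Q i j.
Proof. by rewrite /wcoef !coefD. Qed.

Lemma wcoefB (P Q : R2) i j : wcoef (P - Q) i j = wcoef P i j - wcoef Q i j.
Proof. by rewrite /wcoef !coefB. Qed.

Lemma wcoefMn (P : R2) i j k : wcoef (P *+ k) i j = wcoef P i j *+ k.
Proof. by rewrite /wcoef !coefMn. Qed.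

Lemma wcoef_sum I (r : seq I) (Pr : pred I) (G : I -> R2) i j :
  wcoef (\sum_(k <- r | Pr k) G k) i j = \sum_(k <- r | Pr k) wcoef (G k) i j.
Proof. by rewrite /wcoef !coef_sum. Qed.

Lemma supp_mono (P : R2) (R1 R2' : nat -> nat -> Prop) :
  (forall i j, R1 i j -> R2' i j) -> supp P R1 -> supp P R2'.
Proof. by move=> H sP i j /sP /H. Qed.

Lemma supp0 Rl : supp 0 Rl.
Proof. by move=> i j; rewrite /wcoef !coef0 eqxx. Qed.

Lemma suppD (P Q : R2) Rl : supp P Rl -> supp Q Rl -> supp (P + Q) Rl.
Proof.
move=> sP sQ i j; rewrite wcoefD.
by case: (wcoef P i j =P 0) => [->|/eqP/sP//]; rewrite add0r; apply: sQ.
Qed.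

Lemma suppN (P : R2) Rl : supp P Rl -> supp (- P) Rl.
Proof. by move=> sP i j; rewrite /wcoef !coefN oppr_eq0; apply: sP. Qed.

Lemma suppB (P Q : R2) Rl : supp P Rl -> supp Q Rl -> supp (P - Q) Rl.
Proof. by move=> sP sQ; apply: suppD => //; apply: suppN. Qed.

Lemma supp_sum I (r : seq I) (Pr : pred I) (G : I -> R2) Rl :
  (forall k, Pr k -> supp (G k) Rl) -> supp (\sum_(k <- r | Pr k) G k) Rl.
Proof.
move=> H; elim/big_rec: _ => [|k x Pk sx]; first exact: supp0.
by apply: suppD => //; apply: H.
Qed.

Lemma sum_neq0 (R : nzRingType) (m : nat) (f : 'I_m -> R) :
  \sum_(k < m) f k != 0 -> exists k, f k != 0.
Proof.
case: (pickP (fun k => f k != 0)) => [k fk|f0]; first by exists k.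
by rewrite big1 ?eqxx // => k _; apply/eqP/negbFE/f0.
Qed.

Lemma suppM (P Q : R2) (R1 R2' R3 : nat -> nat -> Prop) :
  supp P R1 -> supp Q R2' ->
  (forall i1 j1 i2 j2, R1 i1 j1 -> R2' i2 j2 -> R3 (i1 + i2)%N (j1 + j2)%N) ->
  supp (P * Q) R3.
Proof.
move=> sP sQ H i j; rewrite /wcoef coefM coef_sum => /sum_neq0 [a].
rewrite coefM => /sum_neq0 [b]; rewrite mulf_eq0 negb_or => /andP [h1 h2].
have := H _ _ _ _ (sP _ _ h1) (sQ _ _ h2).
by rewrite !subnKC // -ltnS ltn_ord.
Qed.

Definition xd (P : R2) : R2 := P^`().
Definition cd (P : R2) : R2 := map_poly (@deriv F) P.

Lemma cdB (P Q : R2) : cd (P - Q) = cd P - cd Q.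
Proof. exact: raddfB. Qed.

Lemma cdM (P Q : R2) : cd (P * Q) = cd P * Q + P * cd Q.
Proof.
apply/polyP => j; rewrite /cd coef_map_id0 ?deriv0 // !coefD !coefM.
rewrite (big_morph _ (@derivD _) (@deriv0 _)) -big_split; apply: eq_bigr => a _ /=.
by rewrite derivM !coef_map_id0 ?deriv0.
Qed.

Lemma supp_scale (P Q : R2) (Rl Rl' : nat -> nat -> Prop) (c : nat -> nat -> nat)
  (shift : nat -> nat -> nat * nat) :
  (forall i j, wcoef Q i j = wcoef P (shift i j).1 (shift i j).2 *+ c i j) ->
  (forall i j, Rl (shift i j).1 (shift i j).2 -> Rl' i j) ->
  supp P Rl -> supp Q Rl'.
Proof.
move=> eQ H sP i j; rewrite eQ.
case: (wcoef P (shift i j).1 (shift i j).2 =P 0) => [->|/eqP/sP/H//].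
by rewrite mul0rn eqxx.
Qed.

Lemma supp_xd (P : R2) Rl : supp P Rl -> supp (xd P) (fun i j => Rl i j.+1).
Proof.
apply: (@supp_scale P (xd P) Rl _ (fun _ j => j.+1) (fun i j => (i, j.+1))) => //.
by move=> i j; rewrite /wcoef /xd coef_deriv coefMn.
Qed.

Lemma supp_cd (P : R2) Rl : supp P Rl -> supp (cd P) (fun i j => Rl i.+1 j).
Proof.
apply: (@supp_scale P (cd P) Rl _ (fun i _ => i.+1) (fun i j => (i.+1, j))) => //.
by move=> i j; rewrite /wcoef /cd coef_map_id0 ?deriv0 // coef_deriv.
Qed.

Lemma supp_nderivn (P : R2) t Rl :
  supp P Rl -> supp (P^`N(t)) (fun i j => Rl i (t + j)%N).
Proof.
by apply: (@supp_scale P _ Rl _ (fun _ j => 'C(t + j, t)) (fun i j => (i, t + j)%N))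
  => // i j; rewrite /wcoef coef_nderivn coefMn.
Qed.

Lemma supp_mderivn (P : R2) t Rl : supp P Rl ->
  supp (map_poly (fun c : {poly F} => c^`(t)) P) (fun i j => Rl (t + i)%N j).
Proof.
have d0 : (0 : {poly F})^`(t) = 0.
  by apply/polyP => i; rewrite coef_derivn !coef0 mul0rn.
by apply: (@supp_scale P _ Rl _ (fun i _ => (t + i) ^_ t) (fun i j => (t + i, j)%N))
  => // i j; rewrite /wcoef coef_map_id0 // coef_derivn.
Qed.

End Support.

Section Weight.
Variable F : fieldType.
Variables p q : nat.
Local Notation R2 := {poly {poly F}}.

Lemma wdelta_ge (P : R2) i j :
  wcoef P i j != 0 -> (p * i + q * j <= wdelta p q P)%N.
Proof.
move=> nz; have hj : (j < size P)%N.
  by rewrite ltnNge; apply: contra nz => h; rewrite wcoef_out ?h.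
have hi : leq i.+1 (size P`_j).
  by rewrite ltnNge; apply: contra nz => h; rewrite wcoef_out ?h ?orbT.
rewrite /wdelta; apply: leq_trans (leq_bigmax (Ordinal hj)).
exact: (@leq_bigmax_cond _ (fun i0 : 'I_(size P`_j) => wcoef P i0 j != 0) _
  (Ordinal hi)).
Qed.

Lemma wdelta_att (P : R2) : P != 0 ->
  exists i j, wcoef P i j != 0 /\ (p * i + q * j)%N = wdelta p q P.
Proof.
move=> P0; have [i0 nz0] := wcoef_lead P0.
have sP : (0 < #|'I_(size P)|)%N by rewrite card_ord size_poly_gt0.
have [j dj] := bigop.eq_bigmax (fun j : 'I_(size P) =>
  \big[maxn/0%N]_(i < size P`_j | wcoef P i j != 0) (p * i + q * j)%N) sP.
rewrite -/(wdelta p q P) in dj.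
case: (pickP (fun i : 'I_(size P`_j) => wcoef P i j != 0)) => [i1 nz1|none].
  rewrite dj (@bigop.bigmax_eq_arg _ i1
    (fun i : 'I_(size P`_j) => wcoef P i j != 0)) //.
  by case: arg_maxnP => // i nz _; exists i, j.
have d0 : wdelta p q P = 0%N by rewrite dj big_pred0.
exists i0, (size P).-1; split => //.
by rewrite d0; apply/eqP; rewrite -leqn0 -d0 wdelta_ge.
Qed.

Lemma wcoef_wsymbol (P : R2) i j :
  wcoef (wsymbol p q P) i j =
  if (p * i + q * j == wdelta p q P)%N then wcoef P i j else 0.
Proof.
rewrite {1}/wcoef /wsymbol coef_poly; case: ltnP => hj; last first.
  by rewrite coef0 wcoef_out ?hj ?if_same.
by rewrite coef_poly; case: ltnP => hi //; rewrite wcoef_out ?hi ?orbT ?if_same.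
Qed.

Definition qhom (P : R2) (w : nat) : Prop :=
  supp P (fun i j => (p * i + q * j)%N = w).

Lemma qhom_wsymbol (P : R2) : qhom (wsymbol p q P) (wdelta p q P).
Proof. by move=> i j; rewrite wcoef_wsymbol; case: ifP => [/eqP//|_]; rewrite eqxx. Qed.

Lemma supp_wdelta (P : R2) : supp P (fun i j => (p * i + q * j <= wdelta p q P)%N).
Proof. by move=> i j; apply: wdelta_ge. Qed.

Lemma supp_wsymbol_rest (P : R2) :
  supp (P - wsymbol p q P) (fun i j => (p * i + q * j < wdelta p q P)%N).
Proof.
move=> i j; rewrite wcoefB wcoef_wsymbol.
case: ifP => [_|/eqP ne]; first by rewrite subrr eqxx.
by rewrite subr0 ltn_neqAle => /wdelta_ge ->; rewrite andbT; apply/eqP.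
Qed.

Lemma wsymbol_neq0 (P : R2) : P != 0 -> wsymbol p q P != 0.
Proof.
move=> /wdelta_att [i [j [nz e]]]; apply: contraNneq nz => h.
by have := wcoef_wsymbol P i j; rewrite h /wcoef !coef0 e eqxx => <-.
Qed.

End Weight.

(* Expanding the Weyl product as
   P * Q + dxi P dchi Q + (terms with t >= 2 derivatives), the commutator
   [L, M] equals the Poisson bracket {L, M} up to terms of weight at least
   2(p+q) below delta(L) + delta(M); replacing L, M by their symbols costs
   another strict drop.  So if [L, M] = 0, the Poisson bracket of the
   symbols, which is quasi-homogeneous, must vanish. *)
Section PrincipalPart.
Variable F : fieldType.
Variables p q : nat.
Local Notation R2 := {poly {poly F}}.
Local Notation weight i j := (p * i + q * j)%N.

Definition poisson (A B : R2) : R2 := xd A * cd B - cd A * xd B.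

Definition weyl_term (P Q : R2) (t : nat) : R2 :=
  P^`N(t) * map_poly (fun c : {poly F} => c^`(t)) Q.

Lemma wmul_split (P Q : R2) : wmul P Q =
  P * Q + xd P * cd Q + \sum_(t < size P) weyl_term P Q t.+2.
Proof.
have -> : wmul P Q = \sum_(t < (size P).+2) weyl_term P Q t.
  rewrite /wmul (big_ord_widen _ (weyl_term P Q) (leqW (leqnSn _))) big_mkcond.
  apply: eq_bigr => t _; case: ltnP => // ht.
  by rewrite /weyl_term nderivn_poly0 // mul0r.
by rewrite !big_ord_recl addrA /weyl_term nderivn0 nderivn1 map_poly_id.
Qed.

Lemma supp_poisson (A B : R2) (PA PB : nat -> Prop) :
  supp A (fun i j => PA (weight i j)) -> supp B (fun i j => PB (weight i j)) ->
  supp (poisson A B) (fun i j =>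
    exists u v, [/\ PA u, PB v & (weight i j + (p + q) = u + v)%N]).
Proof.
move=> sA sB; apply: suppB.
  apply: suppM (supp_xd sA) (supp_cd sB) _ => i1 j1 i2 j2 h1 h2.
  by exists (weight i1 j1.+1), (weight i2.+1 j2); split => //; nia.
apply: suppM (supp_cd sA) (supp_xd sB) _ => i1 j1 i2 j2 h1 h2.
by exists (weight i1.+1 j1), (weight i2 j2.+1); split => //; nia.
Qed.

Hypothesis pq_pos : (0 < p + q)%N.

(* The terms with at least two derivatives drop the weight by 2(p+q). *)
Lemma supp_weyl_tail (P Q : R2) :
  supp (\sum_(t < size P) weyl_term P Q t.+2)
    (fun i j => (weight i j + (p + q) < wdelta p q P + wdelta p q Q)%N).
Proof.
apply: supp_sum => t _; rewrite /weyl_term.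
apply: suppM (supp_nderivn (t := t.+2) (@supp_wdelta _ p q P))
  (supp_mderivn (t := t.+2) (@supp_wdelta _ p q Q)) _ => i1 j1 i2 j2 h1 h2; nia.
Qed.

Lemma supp_commutator_principal (L M : R2) :
  supp (wmul L M - wmul M L - poisson (wsymbol p q L) (wsymbol p q M))
    (fun i j => (weight i j + (p + q) < wdelta p q L + wdelta p q M)%N).
Proof.
set sL := wsymbol p q L; set sM := wsymbol p q M.
have -> : wmul L M - wmul M L - poisson sL sM =
    poisson (L - sL) M + poisson sL (M - sM) +
    \sum_(t < size L) weyl_term L M t.+2 - \sum_(t < size M) weyl_term M L t.+2.
  by rewrite !wmul_split /poisson /xd !derivB !cdB; ring.
have low (P Q : R2) (PA PB : nat -> Prop) :
  supp P (fun i j => PA (weight i j)) -> supp Q (fun i j => PB (weight i j)) ->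
  (forall u v, PA u -> PB v -> (u + v < wdelta p q L + wdelta p q M)%N) ->
  supp (poisson P Q) (fun i j =>
    (weight i j + (p + q) < wdelta p q L + wdelta p q M)%N).
  move=> sP sQ H; apply: supp_mono (supp_poisson sP sQ).
  by move=> i j [u [v [hu hv ->]]]; apply: H.
apply: suppB; [apply: suppD; [apply: suppD|] | ].
- apply: (low _ _ (fun w => w < wdelta p q L)%N (fun w => w <= wdelta p q M)%N
    (@supp_wsymbol_rest _ p q L) (@supp_wdelta _ p q M)) => u v /=; lia.
- apply: (low _ _ (fun w => w = wdelta p q L) (fun w => w < wdelta p q M)%N
    (@qhom_wsymbol _ p q L) (@supp_wsymbol_rest _ p q M)) => u v /=; lia.
- exact: (@supp_weyl_tail L M).
- by rewrite [(wdelta p q L + _)%N]addnC; apply: (@supp_weyl_tail M L).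
Qed.

Lemma poisson_wsymbol_eq0 (L M : R2) : wmul L M = wmul M L ->
  poisson (wsymbol p q L) (wsymbol p q M) = 0.
Proof.
move=> comm; apply/polyP => j; apply/polyP => i; rewrite !coef0.
apply/eqP/negPn/negP => nz.
have [u [v [-> -> e]]] :=
  supp_poisson (PA := fun w => w = wdelta p q L) (PB := fun w => w = wdelta p q M)
    (@qhom_wsymbol _ p q L) (@qhom_wsymbol _ p q M) nz.
have := @supp_commutator_principal L M i j.
by rewrite comm subrr sub0r /wcoef coefN coefN oppr_eq0 e ltnn => /(_ nz).
Qed.

End PrincipalPart.

(* The Euler derivation E = p chi d/dchi + q xi d/dxi multiplies a
   quasi-homogeneous polynomial by its weight.  Two consequences: a
   vanishing Poisson bracket {A, B} of quasi-homogeneous A, B becomes the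
   relation  b * dxi A * B = a * A * dxi B  between xi-derivatives only, and
   a root of a quasi-homogeneous power is itself quasi-homogeneous. *)
Section Euler.
Variable F : fieldType.
Variables p q : nat.
Local Notation R2 := {poly {poly F}}.

Definition chi : R2 := ('X : {poly F})%:P.

Definition euler (P : R2) : R2 := chi * cd P *+ p + 'X * xd P *+ q.

Lemma wcoef_euler (P : R2) i j :
  wcoef (euler P) i j = wcoef P i j *+ (p * i + q * j).
Proof.
rewrite /wcoef /euler coefD !coefMn coefD !coefMn coefCM.
have -> : ('X * (cd P)`_j)`_i = P`_j`_i *+ i.
  rewrite coefXM /cd coef_map_id0 ?deriv0 //.
  by case: i => [|i] /=; rewrite ?mulr0n // coef_deriv.
have -> : ('X * xd P)`_j`_i = P`_j`_i *+ j.
  rewrite coefXM; case: j => [|j] /=; first by rewrite coef0 mulr0n.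
  by rewrite /xd coef_deriv coefMn.
by rewrite -!mulrnA -mulrnDr mulnC [(j * q)%N]mulnC.
Qed.

Lemma euler_qhom (P : R2) w : qhom p q P w -> euler P = P *+ w.
Proof.
move=> hP; apply/polyP => j; apply/polyP => i.
rewrite -[_`_i]/(wcoef (euler P) i j) wcoef_euler !coefMn -/(wcoef P i j).
by case: (wcoef P i j =P 0) => [->|/eqP/hP ->]; rewrite ?mul0rn.
Qed.

Lemma eulerM (P Q : R2) : euler (P * Q) = euler P * Q + P * euler Q.
Proof. by rewrite /euler cdM /xd derivM; ring. Qed.

Lemma euler_poisson (A B : R2) a b : qhom p q A a -> qhom p q B b ->
  poisson A B = 0 -> xd A * B *+ b = A * xd B *+ a.
Proof.
move=> hA hB AB0; apply/eqP; rewrite -subr_eq0; apply/eqP.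
transitivity (xd A * euler B - euler A * xd B).
  by rewrite (euler_qhom hA) (euler_qhom hB); ring.
by rewrite -[RHS](mul0rn _ p) -(mulr0 chi) -AB0 /euler /poisson; ring.
Qed.

Lemma derivation_exp (R : comNzRingType) (D : R -> R) :
  (forall x y, D (x * y) = D x * y + x * D y) ->
  forall x k, D (x ^+ k.+1) = D x * x ^+ k *+ k.+1.
Proof.
move=> DM x; elim=> [|k IH]; first by rewrite expr1 expr0 mulr1.
by rewrite exprSr DM IH exprSr; ring.
Qed.

Hypothesis F_char0 : [pchar F] =i pred0.

Lemma qhom_root (g : R2) k w : g != 0 -> qhom p q (g ^+ k.+1) w ->
  supp g (fun i j => ((p * i + q * j) * k.+1)%N = w).
Proof.
move=> g0 hg i j nz.
have e1 := euler_qhom hg; rewrite (derivation_exp eulerM) in e1.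
have : (euler g *+ k.+1) * g ^+ k = (g *+ w) * g ^+ k.
  by rewrite mulrnAl e1 exprSr mulrnAl mulrC.
move/(mulIf (expf_neq0 k g0)) => /(congr1 (fun P : R2 => wcoef P i j)).
rewrite /= !wcoefMn wcoef_euler -mulrnA.
exact: (@mulrnI_char0 F F_char0 _ _ _ nz).
Qed.

End Euler.

Lemma unit_poly2 (F : fieldType) (P : {poly {poly F}}) :
  P \is a GRing.unit -> exists2 c : F, c != 0 & P = c%:P%:P.
Proof.
rewrite poly_unitE => /andP [/eqP s1]; rewrite poly_unitE => /andP [/eqP s2 _].
have e1 : P = (P`_0)%:P by apply: size1_polyC; rewrite s1.
have e2 : P`_0 = (P`_0`_0)%:P by apply: size1_polyC; rewrite s2.
exists (P`_0`_0); last by rewrite {1}e1 {1}e2.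
by apply: contra_eqN s2 => /eqP c0; rewrite e2 c0 size_poly0.
Qed.

(* For coprime weights p, q,
   a polynomial g of weight q*N all of whose monomials chi^i xi^j satisfy
   p*i + q*j = q*N is the "homogenization"
   H(Q) = sum_t Q_t (chi^q)^(r-t) (xi^p)^t  (r = N/p)  of a one-variable
   polynomial Q.  Over an algebraically closed field Q splits into linear
   factors, and H is multiplicative on them, so an irreducible such g with
   g(chi, 0) != 0 is c * (xi^p - k chi^q), in particular N = p. *)
Section QuasiHomogeneous.
Variable F : closedFieldType.
Local Notation R2 := {poly {poly F}}.
Variables p q : nat.
Hypothesis p_pos : (0 < p)%N.
Hypothesis pq_coprime : coprime p q.

Definition chiq : R2 := ('X^q)%:P.
Definition xip : R2 := 'X^p.

Definition homogenize (m : nat) (Q : {poly F}) : R2 :=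
  \sum_(t < m.+1) (Q`_t)%:P%:P * chiq ^+ (m - t) * xip ^+ t.

Lemma wcoef_mono (c : F) a b i j :
  wcoef (c%:P%:P * chiq ^+ a * xip ^+ b) i j =
  if (i == q * a)%N && (j == p * b)%N then c else 0.
Proof.
rewrite /chiq /xip -rmorphXn -!exprM -rmorphM /wcoef coefMXn.
case: ltnP => hj.
  rewrite coef0 (_ : (j == p * b)%N = false) ?andbF //.
  by apply/negbTE; rewrite neq_ltn hj.
rewrite coefC; case: (j - p * b =P 0)%N => [e|ne]; last first.
  rewrite coef0 (_ : (j == p * b)%N = false) ?andbF //.
  by apply/eqP => e; apply: ne; rewrite e subnn.
have -> : j = (p * b)%N by apply/eqP; rewrite eqn_leq hj -subn_eq0 e.
by rewrite eqxx andbT coefCM coefXn; case: eqP; rewrite ?mulr1 ?mulr0.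
Qed.

Lemma homogenize_factor m (Q : {poly F}) (k : F) : (size Q <= m.+1)%N ->
  homogenize m.+1 (Q * ('X - k%:P)) = homogenize m Q * (xip - k%:P%:P * chiq).
Proof.
move=> hQ; have ce t : (Q * ('X - k%:P))`_t =
    (if t == 0%N then 0 else Q`_t.-1) - Q`_t * k.
  by rewrite mulrBr coefB coefMX coefMC.
rewrite /homogenize.
transitivity (\sum_(t < m.+2) ((if (t : nat) == 0%N then 0 else (Q`_t.-1)%:P%:P) *
      chiq ^+ (m.+1 - t) * xip ^+ t)
  - \sum_(t < m.+2) ((Q`_t)%:P%:P * chiq ^+ (m.+1 - t) * xip ^+ t) * k%:P%:P).
  rewrite -sumrB; apply: eq_bigr => t _; rewrite ce !rmorphB !rmorphM /=.
  by case: ifP => _; rewrite ?rmorph0; ring.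
rewrite big_ord_recl /= mul0r mul0r add0r.
rewrite [X in _ - X]big_ord_recr /= nth_default // polyC0 polyC0 !mul0r addr0.
rewrite mulrBr; congr (_ - _); rewrite mulr_suml; apply: eq_bigr => t _.
  by rewrite /bump /= add1n add0n subSS exprSr; ring.
by rewrite /= subSn; [rewrite exprS; ring | rewrite -ltnS ltn_ord].
Qed.

Lemma qhom_support (g : R2) N i j : qhom p q g (q * N) -> (p %| N)%N ->
  wcoef g i j != 0 -> (j <= N)%N ->
  exists t, [/\ (t <= N %/ p)%N, i = (q * (N %/ p - t))%N & j = (p * t)%N].
Proof.
move=> hg dN nz jle; have hij := hg i j nz.
have e1 : (p * i = q * (N - j))%N by rewrite mulnBr -hij addnK.
have dj : (p %| j)%N.
  by rewrite -(dvdn_subr jle dN) -(Gauss_dvdr _ pq_coprime) -e1 dvdn_mulr.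
exists (j %/ p)%N; set t := (j %/ p)%N; set r := (N %/ p)%N.
have ej : j = (t * p)%N by rewrite divnK.
have hN : N = (r * p)%N by rewrite divnK.
split; last by rewrite mulnC.
- by rewrite -(leq_pmul2r p_pos) -ej -hN.
- by apply/eqP; rewrite -(eqn_pmul2l p_pos) e1 hN ej -mulnBl; apply/eqP; ring.
Qed.

Lemma qhom_coef0_dvd (g : R2) N : qhom p q g (q * N) -> g`_0 != 0 -> (p %| N)%N.
Proof.
move=> hg g00; have [e he] : exists e, wcoef g e 0 != 0.
  by exists (size g`_0).-1; rewrite /wcoef -/(lead_coef _) lead_coef_eq0.
have := hg e 0%N he; rewrite muln0 addn0 => pe.
by rewrite -(Gauss_dvdr _ pq_coprime) -pe dvdn_mulr.
Qed.

Lemma qhom_homogenize (g : R2) N : qhom p q g (q * N) -> (p %| N)%N ->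
  (size g <= N.+1)%N ->
  g = homogenize (N %/ p) (\poly_(t < (N %/ p).+1) wcoef g (q * (N %/ p - t)) (p * t)).
Proof.
move=> hg dN sg; set r := (N %/ p)%N; set P0 := \poly_(t < r.+1) _.
apply/polyP => j; apply/polyP => i.
change (wcoef g i j = wcoef (homogenize r P0) i j).
rewrite /homogenize wcoef_sum.
under eq_bigr => t _ do rewrite wcoef_mono coef_poly ltn_ord.
case: (boolP [exists t : 'I_r.+1, (i == q * (r - t))%N && (j == p * t)%N]).
  case/existsP => t0 /andP [/eqP hi /eqP hj].
  rewrite (bigD1 t0) //= hi hj !eqxx /= big1 ?addr0 // => t nt.
  case: ifP => // /andP [_ /eqP ht]; suff : t = t0 by move/eqP: nt.
  by apply: val_inj; apply/eqP; rewrite -(eqn_pmul2l p_pos) -ht.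
rewrite negb_exists => /forallP hn; rewrite big1 => [|t _]; last by case: ifP (hn t).
apply/eqP; apply: contraT => nz.
have jle : (j <= N)%N.
  by rewrite -ltnS; apply: leq_trans sg; rewrite ltnNge; apply: contra nz => h;
    rewrite wcoef_out ?h.
have [t [tle hi hj]] := qhom_support hg dN nz jle.
by have := hn (Ordinal (tle : (t < r.+1)%N)); rewrite /= hi hj !eqxx.
Qed.

Lemma xip_sub_chiq_size (k : F) : size (xip - k%:P%:P * chiq) = p.+1.
Proof. by rewrite /xip /chiq -rmorphM size_XnsubC. Qed.

Lemma qhom_irreducible (g : R2) : birreducible g ->
  qhom p q g (q * (size g).-1) -> g`_0 != 0 -> (0 < (size g).-1)%N ->
  (size g).-1 = p /\
  exists c k, c != 0 /\ g = c%:P%:P * (xip - k%:P%:P * chiq).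
Proof.
move=> [g0 _ irr] hg g00 N_pos; set N := (size g).-1 in hg N_pos *.
have dN := qhom_coef0_dvd hg g00.
have sg : (size g <= N.+1)%N by rewrite /N leqSpred.
have rep := qhom_homogenize hg dN sg.
set r := (N %/ p)%N in rep; set P0 := \poly_(t < r.+1) _ in rep.
have eN : N = (r * p)%N by rewrite divnK.
have r_pos : (0 < r)%N by move: N_pos; rewrite eN muln_gt0 => /andP [].
have lead0 : P0`_r != 0.
  have [i nz] := wcoef_lead g0.
  have [t [tle hi ht]] := qhom_support hg dN nz (leqnn _).
  have etr : t = r by apply/eqP; rewrite -(eqn_pmul2l p_pos) -ht -/N eN mulnC.
  rewrite coef_poly ltnSn subnn muln0.
  by rewrite [(p * r)%N]mulnC -eN; move: nz; rewrite hi etr subnn muln0.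
have sP0 : size P0 = r.+1.
  apply/anti_leq; rewrite size_poly ltnNge.
  by apply: contra lead0 => /leq_sizeP/(_ r (leqnn r))->.
have [k rk] : exists k, root P0 k by apply/closed_rootP; rewrite sP0 -lt0n.
have [Q0 eQ0] := factor_theorem P0 k rk.
have sQ0 : size Q0 = r.
  have Q0n0 : Q0 != 0.
    by apply: contra_eq_neq sP0 => Q00; rewrite eQ0 Q00 mul0r size_poly0.
  move/eqP: sP0; rewrite eQ0 size_mul ?polyXsubC_eq0 //.
  by rewrite size_XsubC addn2 eqSS => /eqP.
have eg : g = homogenize r.-1 Q0 * (xip - k%:P%:P * chiq).
  by rewrite rep eQ0 -{1}(prednK r_pos) homogenize_factor // prednK // sQ0.
have [/unit_poly2 [c c0 ec] | ] := irr _ _ eg; last first.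
  rewrite poly_unitE xip_sub_chiq_size eqSS => /andP [/eqP p0].
  by move: p_pos; rewrite p0.
have {}eg : g = c%:P%:P * (xip - k%:P%:P * chiq) by rewrite eg ec.
split; last by exists c, k.
by rewrite /N eg mul_polyC size_scale ?xip_sub_chiq_size // polyC_eq0.
Qed.

End QuasiHomogeneous.

Lemma coef_lt_size (R : nzSemiRingType) (P : {poly R}) i : P`_i != 0 -> (i < size P)%N.
Proof. by rewrite ltnNge; apply: contra => /leq_sizeP ->. Qed.

Lemma pchar0_poly (R : idomainType) :
  [pchar R] =i pred0 -> [pchar {poly R}] =i pred0.
Proof. by move=> R0 x; rewrite pchar_poly R0. Qed.

Section CharZeroPoly.
Variable R : idomainType.
Hypothesis R_char0 : [pchar R] =i pred0.

Lemma deriv_exp_relation (g B : {poly R}) m : g != 0 ->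
  g^`() * B *+ m = g * B^`() -> (g ^+ m)^`() * B = g ^+ m * B^`().
Proof.
move=> g0; case: m => [|m] rel.
  move/esym/eqP: rel; rewrite mulr0n mulf_eq0 (negbTE g0) => /eqP.
  by rewrite expr0 derivC mul0r mul1r.
rewrite deriv_exp /=; transitivity (g^`() * B *+ m.+1 * g ^+ m); first by ring.
by rewrite rel exprS; ring.
Qed.


Lemma lead_coef_deriv (P : {poly R}) : lead_coef P^`() = lead_coef P *+ (size P).-1.
Proof.
case sP: (size P) => [|[|n]] /=.
- by move/eqP: sP; rewrite size_poly_eq0 => /eqP ->; rewrite deriv0 lead_coef0.
- by rewrite [P]size1_polyC ?sP // derivC lead_coef0 mulr0n.
have hc : P^`()`_n = lead_coef P *+ n.+1 by rewrite coef_deriv /lead_coef sP.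
have lc0 : lead_coef P != 0 by rewrite lead_coef_eq0 -size_poly_eq0 sP.
have sd : size P^`() = n.+1.
  apply/anti_leq; rewrite coef_lt_size ?andbT; last first.
    by rewrite hc mulrn_eq0_char0 // negb_or lc0.
  by rewrite -ltnS -sP lt_size_deriv // -size_poly_eq0 sP.
by rewrite /lead_coef sd.
Qed.

Lemma wronskian_eq0 (T S : {poly R}) : T^`() * S = T * S^`() -> S != 0 ->
  (size T < size S)%N -> T = 0.
Proof.
move=> e S0 lt; apply/eqP; apply: contraLR lt => T0; rewrite -leqNgt.
have := congr1 lead_coef e; rewrite !lead_coefM !lead_coef_deriv.
rewrite mulrnAl mulrnAr => /(mulrnI_char0 R_char0) h.
have sT : (0 < size T)%N by rewrite size_poly_gt0.
have sS : (0 < size S)%N by rewrite size_poly_gt0.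
by rewrite -(prednK sT) -(prednK sS) h // mulf_neq0 // lead_coef_eq0.
Qed.

Lemma wronskian_proportional (S B : {poly R}) : S != 0 -> size S = size B ->
  S^`() * B = S * B^`() -> lead_coef S *: B = lead_coef B *: S.
Proof.
move=> S0 sSB hSB; apply/eqP; rewrite -subr_eq0; apply/eqP.
apply: (wronskian_eq0 _ S0).
  rewrite derivB !derivZ -!mul_polyC; apply/eqP; rewrite -subr_eq0; apply/eqP.
  transitivity ((lead_coef S)%:P * (S * B^`() - S^`() * B)); first by ring.
  by rewrite hSB subrr mulr0.
have S_pos : (0 < size S)%N by rewrite size_poly_gt0.
rewrite -(prednK S_pos) ltnS; apply/leq_sizeP => j hj; rewrite coefB !coefZ.
case: (ltnP (size S).-1 j) => hS; last first.
  have -> : j = (size S).-1 by apply/anti_leq; rewrite hj hS.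
  by rewrite {1}sSB -/(lead_coef B) -/(lead_coef S) mulrC subrr.
by rewrite !nth_default ?mulr0 ?subrr // -?sSB -(prednK S_pos).
Qed.

Lemma deriv_relation_size (g B : {poly R}) w w' : g != 0 -> B != 0 ->
  g^`() * B *+ w = g * B^`() *+ w' ->
  ((size g).-1 * w = (size B).-1 * w')%N.
Proof.
move=> g0 B0 /(congr1 lead_coef).
rewrite -!scaler_nat !lead_coefZ !lead_coefM !lead_coef_deriv !mulr_natl.
rewrite mulrnAl mulrnAr -!mulrnA => /(mulrnI_char0 R_char0); apply.
by rewrite mulf_neq0 // lead_coef_eq0.
Qed.

(* In  w * g' * B = w' * g * B'  with w' > 0, if xi does not divide g then
   it does not divide B either: otherwise compare the coefficients of
   xi^(m-1), where xi^m is the exact power of xi dividing B. *)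
Lemma deriv_relation_coef0 (g B : {poly R}) w w' : g`_0 != 0 -> (0 < w')%N ->
  B != 0 -> g^`() * B *+ w = g * B^`() *+ w' -> B`_0 != 0.
Proof.
move=> g0 w'_pos B0 rel.
have [m [B1 nB1 eB]] := multiplicity_XsubC B 0.
rewrite polyC0 subr0 B0 /= /root horner_coef0 in eB nB1.
case: m eB => [|m] eB; first by rewrite eB expr0 mulr1.
have eB' : B^`() = B1^`() * 'X^(m.+1) + (B1 * 'X^m) *+ m.+1.
  by rewrite eB derivM derivXn mulrnAr.
move/(congr1 (fun P : {poly R} => P`_m)): rel.
rewrite eB' {1}eB mulrDr !coefMn coefD mulrnAr coefMn !mulrA !coefMXn.
rewrite ltnSn ltnn subnn mul0rn add0r coef0M.
move/esym/eqP; rewrite -mulrnA mulrn_eq0_char0 // muln_eq0 mulf_eq0.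
by rewrite (negbTE g0) (negbTE nB1) (negbTE (lt0n_neq0 w'_pos)).
Qed.

End CharZeroPoly.

Lemma wronskian_const_multiple (F : fieldType) (S B : {poly {poly F}}) (cs cb : F) :
  [pchar F] =i pred0 -> S != 0 -> size S = size B -> S^`() * B = S * B^`() ->
  lead_coef S = cs%:P -> lead_coef B = cb%:P ->
  exists2 c : F, c != 0 & B = c%:P%:P * S.
Proof.
move=> F_char0 S0 sSB hSB lcS lcB.
have B0 : B != 0 by rewrite -size_poly_gt0 -sSB size_poly_gt0.
have cs0 : cs != 0 by rewrite -polyC_eq0 -lcS lead_coef_eq0.
have cb0 : cb != 0 by rewrite -polyC_eq0 -lcB lead_coef_eq0.
have := wronskian_proportional (pchar0_poly F_char0) S0 sSB hSB.
rewrite lcS lcB -!mul_polyC => e.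
exists (cb / cs); first by rewrite mulf_neq0 ?invr_eq0.
apply: (@mulfI _ cs%:P%:P); first by rewrite !polyC_eq0.
by rewrite e mulrA -!rmorphM /= [cs * _]mulrC divfK.
Qed.

Lemma qhom_lead_const (F : fieldType) (p q : nat) (P : {poly {poly F}}) :
  (0 < p)%N -> qhom p q P (q * (size P).-1) ->
  lead_coef P = ((lead_coef P)`_0)%:P.
Proof.
move=> p_pos hP; apply: size1_polyC; apply/leq_sizeP => [[|i]] // _.
apply/eqP; apply: contraT => nz; have := hP i.+1 _ nz.
rewrite -[X in _ = X]add0n => /addIn /eqP.
by rewrite muln_eq0 (negbTE (lt0n_neq0 p_pos)).
Qed.

Lemma wcoef_CXn (F : fieldType) (c : F) m i j :
  wcoef (c%:P%:P * 'X^m) i j = if (i == 0%N) && (j == m) then c else 0.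
Proof.
rewrite /wcoef coefCM coefXn; case: eqP => _; rewrite ?andbT ?andbF ?mulr1 ?mulr0.
  by rewrite coefC.
by rewrite coef0.
Qed.

Lemma coef_XsubC_exp (R : comNzRingType) (x : R) n : (0 < n)%N ->
  (('X - x%:P) ^+ n)`_n.-1 = - (x *+ n).
Proof.
move=> n_pos; have := @coefPn_prod_XsubC _ (nseq n x).
by rewrite size_nseq -lt0n n_pos !big_nseq iter_mulr_1 iter_addr_0 => ->.
Qed.

Lemma coprime_div_gcd (p q : nat) : (0 < p)%N ->
  coprime (p %/ gcdn p q) (q %/ gcdn p q).
Proof.
move=> p_pos; have d_pos : (0 < gcdn p q)%N by rewrite gcdn_gt0 p_pos.
rewrite /coprime -(eqn_pmul2r d_pos) mul1n muln_gcdl.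
by rewrite !divnK ?dvdn_gcdl ?dvdn_gcdr.
Qed.

Lemma qhom_scale (F : fieldType) (p q d w : nat) (P : {poly {poly F}}) :
  (0 < d)%N -> qhom (p * d) (q * d) P (w * d) -> qhom p q P w.
Proof.
move=> d_pos hP i j /hP e; apply/eqP; rewrite -(eqn_pmul2r d_pos) -e.
by rewrite mulnDl -!mulnA [(d * i)%N]mulnC [(d * j)%N]mulnC.
Qed.

Section TestFiltration.
Variable F : closedFieldType.
Hypothesis F_char0 : [pchar F] =i pred0.
Local Notation R2 := {poly {poly F}}.
Variables (n : nat) (L : R2) (p q : nat).
Hypothesis n_pos : (0 < n)%N.
Hypothesis L_size : size L = n.+1.
Hypothesis L_monic : lead_coef L = 1.
Hypothesis L_normal : L`_n.-1 = 0.
Hypothesis pq_pos : (0 < p + q)%N.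
Hypothesis L_delta : wdelta p q L = (q * n)%N.
Variables a b : nat.
Hypothesis ab_coef : wcoef L a b != 0.
Hypothesis ab_other : (a, b) != (0%N, n).
Hypothesis ab_weight : (p * a + q * b = q * n)%N.
Variables (g : R2) (k : nat).
Hypothesis g_irr : birreducible g.
Hypothesis L_symbol : wsymbol p q L = g ^+ k.

Local Notation A := (wsymbol p q L).
Local Notation N := (size g).-1.
Local Notation p' := (p %/ gcdn p q)%N.
Local Notation q' := (q %/ gcdn p q)%N.

Let poly_char0 := pchar0_poly F_char0.
Let poly2_char0 := pchar0_poly poly_char0.

Lemma wcoef_L_top i : wcoef L i n = (i == 0%N)%:R.
Proof.
by rewrite /wcoef (_ : L`_n = 1) ?coef1 // -L_monic /lead_coef L_size.
Qed.

Lemma wcoef_symbol_top i : wcoef A i n = (i == 0%N)%:R.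
Proof.
rewrite wcoef_wsymbol L_delta wcoef_L_top.
by case: i => [|i]; rewrite ?muln0 ?eqxx //= if_same.
Qed.

(* (a, b) is a monomial of the symbol other than xi^n. *)
Lemma symbol_not_monomial (c : F) : A != c%:P%:P * 'X^n.
Proof.
have nz : wcoef A a b != 0 by rewrite wcoef_wsymbol ab_weight L_delta eqxx.
apply: contraNneq nz => ->; rewrite wcoef_CXn; case: ifP => // /andP [/eqP ea /eqP eb].
by move: ab_other; rewrite ea eb eqxx.
Qed.

(* p > 0: otherwise q b = q n forces b = n, and then a = 0 as L is monic. *)
Lemma weight_p_pos : (0 < p)%N.
Proof.
rewrite lt0n; apply: contra ab_other => /eqP p0.
have q_pos : (0 < q)%N by move: pq_pos; rewrite p0.
move: ab_weight; rewrite p0 mul0n add0n => /eqP; rewrite eqn_pmul2l // => /eqP eb.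
move: ab_coef; rewrite eb wcoef_L_top.
by case: (a) => [|a'] /=; rewrite ?mulr0n eqxx.
Qed.

Lemma symbol_size : size A = n.+1.
Proof.
apply/anti_leq/andP; split; first by rewrite -L_size /wsymbol size_poly.
apply: coef_lt_size; apply/eqP => An0; have := wcoef_symbol_top 0.
by rewrite /wcoef An0 coef0 => /eqP; rewrite eq_sym oner_eq0.
Qed.

Lemma root_degree : n = (N * k)%N.
Proof. by have := size_exp g k; rewrite -L_symbol symbol_size. Qed.

Lemma root_size_pos : (0 < N)%N.
Proof. by have := n_pos; rewrite root_degree muln_gt0 => /andP []. Qed.

Lemma root_exp_pos : (0 < k)%N.
Proof. by have := n_pos; rewrite root_degree muln_gt0 => /andP []. Qed.

Lemma root_neq0 : g != 0.
Proof. by case: g_irr. Qed.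

Lemma root_weight : qhom p q g (q * N).
Proof.
have [k' ek] : exists k', k = k'.+1 by exists k.-1; rewrite prednK // root_exp_pos.
have hA : qhom p q (g ^+ k'.+1) (q * n).
  by rewrite -ek -L_symbol -L_delta; apply: qhom_wsymbol.
move=> i j /(qhom_root F_char0 root_neq0 hA); rewrite root_degree ek mulnA => /eqP.
by rewrite eqn_pmul2r // => /eqP.
Qed.

(* xi does not divide g: otherwise g = c xi and sigma(L) = c^n xi^n. *)
Lemma root_coef0 : g`_0 != 0.
Proof.
apply/eqP => g00; have : root g 0 by rewrite /root horner_coef0 g00.
case/factor_theorem => g1; rewrite subr0 => eg.
case: g_irr => _ _ /(_ _ _ eg) [/unit_poly2 [c c0 ec] | ]; last first.
  by rewrite poly_unitE size_polyX.
have eN : N = 1%N by rewrite eg ec mul_polyC size_scale ?size_polyX // polyC_eq0.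
move: (symbol_not_monomial (c ^+ k)).
by rewrite L_symbol eg ec exprMn -!rmorphXn root_degree eN mul1n eqxx.
Qed.

Lemma gcd_weights_pos : (0 < gcdn p q)%N.
Proof. by rewrite gcdn_gt0 weight_p_pos. Qed.

Lemma qhom_reduce (P : R2) w : qhom p q P (q * w) -> qhom p' q' P (q' * w).
Proof.
move=> hP; apply: (qhom_scale gcd_weights_pos).
by rewrite mulnAC !divnK ?dvdn_gcdl ?dvdn_gcdr.
Qed.

Lemma root_shape : N = p' /\
  exists c kk, c != 0 /\ g = c%:P%:P * (xip F p' - kk%:P%:P * chiq F q').
Proof.
have p'_pos : (0 < p')%N.
  by rewrite divn_gt0 ?gcd_weights_pos // dvdn_leq ?weight_p_pos ?dvdn_gcdl.
exact: (qhom_irreducible p'_pos (coprime_div_gcd q weight_p_pos) g_irr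
  (qhom_reduce root_weight) root_coef0 root_size_pos).
Qed.

(* q > 0: for q = 0 the normal form (no xi^(n-1) term) forces sigma(L) = c xi^n. *)
Lemma weight_q_pos : (0 < q)%N.
Proof.
rewrite lt0n; apply/eqP => q0.
have [eN [c [kk [c0 eg]]]] := root_shape.
have p'1 : p' = 1%N by rewrite q0 gcdn0 divnn weight_p_pos.
rewrite p'1 in eN; rewrite p'1 q0 div0n /xip /chiq expr1 expr0 polyC1 mulr1 in eg.
have eA : A = (c ^+ n)%:P%:P * ('X - (kk%:P)%:P) ^+ n.
  by rewrite L_symbol eg exprMn -!rmorphXn root_degree eN mul1n.
have kk0 : kk = 0.
  have : wcoef A 0 n.-1 = 0.
    by rewrite wcoef_wsymbol L_delta q0 !mul0n addn0 muln0 eqxx /wcoef L_normal coef0.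
  rewrite eA /wcoef coefCM coef_XsubC_exp // coefCM coefN coefMn coefC /=.
  move/eqP; rewrite mulf_eq0 expf_eq0 (negbTE c0) andbF oppr_eq0 /=.
  by rewrite mulrn_eq0_char0 // (negbTE (lt0n_neq0 n_pos)) => /eqP.
by move: (symbol_not_monomial (c ^+ n)); rewrite eA kk0 !polyC0 subr0 eqxx.
Qed.

Variable M : R2.
Hypothesis M_neq0 : M != 0.
Hypothesis LM_comm : wmul L M = wmul M L.

Local Notation B := (wsymbol p q M).
Local Notation J := (size B).-1.

Lemma symbol_M_neq0 : B != 0.
Proof. exact: wsymbol_neq0. Qed.

(* {sigma(L), sigma(M)} = 0 with sigma(L) = g^k gives, after cancelling
   g^(k-1):  delta(M) g' B = q N g B'  (' = d/dxi). *)
Lemma centralizer_relation : xd g * B *+ wdelta p q M = g * xd B *+ (q * N).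
Proof.
have H := euler_poisson (@qhom_wsymbol _ p q L) (@qhom_wsymbol _ p q M)
  (poisson_wsymbol_eq0 pq_pos LM_comm).
rewrite L_delta L_symbol in H.
have [m em] : exists m, k = m.+1 by exists k.-1; rewrite prednK // root_exp_pos.
apply: (mulrIn_char0 poly2_char0 (ltn0Sn m)); apply: (mulIf (expf_neq0 m root_neq0)).
transitivity (xd (g ^+ k) * B *+ wdelta p q M); first by rewrite em /xd deriv_exp; ring.
by rewrite H root_degree em exprS; ring.
Qed.

Lemma centralizer_weight : wdelta p q M = (J * q)%N.
Proof.
have := deriv_relation_size poly_char0 root_neq0 symbol_M_neq0 centralizer_relation.
by move=> e; apply/eqP; rewrite -(eqn_pmul2l root_size_pos) e; apply/eqP; ring.
Qed.

(* xi does not divide B, since it does not divide g. *)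
Lemma centralizer_coef0 : B`_0 != 0.
Proof.
apply: (deriv_relation_coef0 poly_char0 root_coef0 _ symbol_M_neq0
  centralizer_relation).
by rewrite muln_gt0 weight_q_pos root_size_pos.
Qed.

Lemma symbol_M_weight : qhom p q B (q * J).
Proof. by rewrite mulnC -centralizer_weight; apply: qhom_wsymbol. Qed.

(* deg_xi g = p' divides J, since xi does not divide B. *)
Lemma centralizer_degree : (J = J %/ N * N)%N.
Proof.
rewrite divnK // (proj1 root_shape).
exact: (qhom_coef0_dvd (coprime_div_gcd q weight_p_pos) (qhom_reduce symbol_M_weight)
  centralizer_coef0).
Qed.

Lemma centralizer_relation_reduced : xd g * B *+ (J %/ N) = g * xd B.
Proof.
have qN_pos : (0 < q * N)%N by rewrite muln_gt0 weight_q_pos root_size_pos.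
apply: (mulrIn_char0 poly2_char0 qN_pos); rewrite -centralizer_relation.
by rewrite -mulrnA centralizer_weight {2}centralizer_degree; congr (_ *+ _); ring.
Qed.

(* sigma(M) and g^(J/N) solve the same first-order equation and have the
   same degree, hence are proportional. *)
Lemma centralizer_symbol :
  exists2 c : F, c != 0 & exists m : nat, B = c%:P%:P * g ^+ m.
Proof.
set m := (J %/ N)%N; set S := g ^+ m.
have S0 : S != 0 by rewrite expf_neq0 // root_neq0.
have sS : size S = size B.
  have := size_exp g m; rewrite -/S mulnC -centralizer_degree => e.
  have sS_pos : (0 < size S)%N by rewrite size_poly_gt0.
  by rewrite -(prednK sS_pos) e prednK // size_poly_gt0 symbol_M_neq0.
have lcS : lead_coef S = ((lead_coef g)`_0 ^+ m)%:P.
  by rewrite lead_coef_exp {1}(qhom_lead_const weight_p_pos root_weight) rmorphXn.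
have [c c0 eB] := wronskian_const_multiple F_char0 S0 sS
  (deriv_exp_relation root_neq0 centralizer_relation_reduced) lcS
  (qhom_lead_const weight_p_pos symbol_M_weight).
by exists c => //; exists m.
Qed.

End TestFiltration.

Theorem mainTheorem5 (F : closedFieldType) (char0 : [pchar F] =i pred0)
  (n : nat) (L : {poly {poly F}}) :
  (* L of order n > 0 in normal form d^n + u_{n-2} d^{n-2} + ... + u_0 *)
  (0 < n)%N -> size L = n.+1 -> lead_coef L = 1 -> L`_n.-1 = 0 ->
  (* (p,q) defines the test-filtration of L *)
  forall p q : nat, (0 < p + q)%N ->
  wdelta p q L = (q * n)%N ->
  (exists a b : nat, [/\ wcoef L a b != 0, (a, b) != (0%N, n)
                       & (p * a + q * b = q * n)%N]) ->
  (* sigma(L) is a power of an irreducible g *)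
  forall g : {poly {poly F}}, birreducible g ->
  (exists k : nat, wsymbol p q L = g ^+ k) ->
  (* conclusion for every nonzero M in the centralizer of L *)
  forall M : {poly {poly F}}, M != 0 -> wmul L M = wmul M L ->
  exists2 c : F, c != 0 & exists m : nat, wsymbol p q M = c%:P%:P * g ^+ m.
Proof.
move=> n_pos L_size L_monic L_normal p q pq_pos L_delta
  [a [b [ab_coef ab_other ab_weight]]] g g_irr [k L_symbol] M M_neq0 LM_comm.
exact: (centralizer_symbol char0 n_pos L_size L_monic L_normal pq_pos L_delta
  ab_coef ab_other ab_weight g_irr L_symbol M_neq0 LM_comm).
Qed.
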